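(* Let $G$ be a finite non-abelian group admitting a GRR. Then $G$ admits a $2$-GRR.
   Context: A group $G$ admits a GRR if there is a Cayley graph $\mathrm{Cay}(G,R)$ (vertex set $G$, edges $\{g,rg\}$, $R=R^{-1}$, $1\notin R$) whose automorphism group is isomorphic to $G$. An $m$-GRR for $G$ is a finite regular simple graph admitting a semiregular group of automorphisms isomorphic to $G$ with exactly $m$ orbits on vertices and whose full automorphism group is isomorphic to $G$. *)

From HB Require Import structures.
From mathcomp Require Import all_boot all_order all_fingroup.
Set Implicit Arguments. Unset Strict Implicit. Unset Printing Implicit Defensive.
Local Open Scope group_scope.

Definition simple_graph (V : finType) (e : rel V) : Prop :=
  symmetric e /\ irreflexive e.

Definition regular_graph (V : finType) (e : rel V) : Prop :=
  exists k : nat, forall x : V, #|[set y | e x y]| = k.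

Definition graph_aut (V : finType) (e : rel V) : {set {perm V}} :=
  [set p : {perm V} | [forall x, forall y, e (p x) (p y) == e x y]].

Lemma graph_aut_group_set (V : finType) (e : rel V) : group_set (graph_aut e).
Proof.
apply/group_setP; split.
  by rewrite inE; apply/forallP=> x; apply/forallP=> y; rewrite !perm1.
move=> p q; rewrite !inE => /forallP Hp /forallP Hq.
apply/forallP=> x; apply/forallP=> y; rewrite !permM.
by rewrite (eqP (forallP (Hq (p x)) (p y))) (eqP (forallP (Hp x) y)).
Qed.

Canonical graph_aut_group (V : finType) (e : rel V) :=
  Group (graph_aut_group_set e).

Definition cayley_rel (gT : finGroupType) (R : {set gT}) : rel gT :=
  fun g h => h * g^-1 \in R.

Definition has_GRR (gT : finGroupType) : Prop :=
  exists R : {set gT},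
    [/\ R^-1 = R, 1 \notin R &
        graph_aut (cayley_rel R) \isog [set: gT]].

Definition semiregular_perm (V : finType) (H : {set {perm V}}) : Prop :=
  forall (h : {perm V}) (x : V), h \in H -> h x = x -> h = 1.

Definition has_mGRR (gT : finGroupType) (m : nat) : Prop :=
  exists (V : finType) (e : rel V),
    [/\ simple_graph e, regular_graph e,
        exists H : {group {perm V}},
          [/\ H \subset graph_aut e, H \isog [set: gT], semiregular_perm H &
              #|[set orbit 'P H x | x : V]| = m]
      & graph_aut e \isog [set: gT]].

From HB Require Import structures.
From mathcomp Require Import all_boot all_order all_fingroup.
From mathcomp Require Import cyclic zify.
Set Implicit Arguments. Unset Strict Implicit. Unset Printing Implicit Defensive.
Local Open Scope group_scope.

(* Let Cay(G, A) be a GRR.  As G is non-abelian, A is not closed under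
   conjugation (conjugation would be an automorphism fixing 1), so there are
   x in A and a with a x a^-1 notin A.  Join two copies of Cay(G, A) by the
   edges g ~ h' for h g^-1 in S = {1, a, ax}; right multiplication by G acts
   semiregularly on this graph with the two copies as orbits.  A vertex of the
   first copy lies on L - R more triangles than one of the second, where L and
   R count the pairs (u, v) in S^2 with u^-1 v in A, resp. v u^-1 in A; the
   pairs (a, ax) and (ax, a) make L = R + 2.  Hence every automorphism
   preserves the copies, acting on them as right multiplications by some c and
   c', and the cross edges give S c' c^-1 = S.  The right stabiliser of S has
   order dividing 3 and lies in S (as 1 is in S); if nontrivial it would be S
   itself, a group of order 3, in which a and x would commute.  So c = c' and
   the automorphism group is G. *)

Section GraphInvariants.
Variables (V : finType) (e : rel V).

Definition triangles (v : V) : nat :=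
  \sum_p \sum_q [&& e v p, e v q & e p q].

Lemma graph_aut_rel p u v : p \in graph_aut e -> e (p u) (p v) = e u v.
Proof. by rewrite inE => /forallP/(_ u)/forallP/(_ v)/eqP. Qed.

Lemma card_nbhd_aut p v : p \in graph_aut e ->
  #|[set w | e (p v) w]| = #|[set w | e v w]|.
Proof.
move=> autp; rewrite -[RHS](card_imset _ (@perm_inj _ p)); apply: eq_card => w /=.
rewrite -{2}(permKV p w) mem_imset ?inE; last exact: perm_inj.
by rewrite -[w in LHS](permKV p) graph_aut_rel.
Qed.

Lemma triangles_aut p v : p \in graph_aut e -> triangles (p v) = triangles v.
Proof.
move=> autp; rewrite /triangles (reindex_inj (@perm_inj _ p)).
apply: eq_bigr => p' _; rewrite (reindex_inj (@perm_inj _ p)).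
by apply: eq_bigr => q _; rewrite !graph_aut_rel.
Qed.

End GraphInvariants.

Lemma triangles_sumType (L R : finType) (e : rel (L + R)) v : symmetric e ->
  triangles e v =
      \sum_g \sum_h [&& e v (inl g), e v (inl h) & e (inl g) (inl h)]
    + 2 * \sum_g \sum_h [&& e v (inl g), e v (inr h) & e (inl g) (inr h)]
    + \sum_g \sum_h [&& e v (inr g), e v (inr h) & e (inr g) (inr h)].
Proof.
move=> esym; rewrite /triangles big_sumType /=.
under eq_bigr do rewrite big_sumType.
under [in X in _ + X]eq_bigr do rewrite big_sumType.
rewrite !big_split /= mul2n -addnn !addnA; congr (_ + _ + _ + _).
rewrite exchange_big; apply: eq_bigr => g _; apply: eq_bigr => h _.
by rewrite andbCA [e (inr _) _]esym.
Qed.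

Lemma induced_perm (T U : finType) (f : T -> U) (p : {perm U}) :
  injective f -> (forall x, exists y, p (f x) = f y) ->
  exists q : {perm T}, forall x, p (f x) = f (q x).
Proof.
move=> f_inj /fin_all_exists [q pfq].
have q_inj : injective q by move=> x y qxy; apply/f_inj/(@perm_inj _ p); rewrite !pfq qxy.
by exists (perm q_inj) => x; rewrite permE.
Qed.

Section CayleyGraph.
Variables (gT : finGroupType) (A : {set gT}).

Definition rmul (c : gT) : {perm gT} := perm (mulIg c).

Lemma rmulE c g : rmul c g = g * c.
Proof. exact: permE. Qed.

Lemma rmul_cayley_aut c : rmul c \in graph_aut (cayley_rel A).
Proof.
rewrite inE; apply/forallP => g; apply/forallP => h.
by rewrite !rmulE /cayley_rel invMg mulgA mulgK.
Qed.

Lemma rmul_inj : injective rmul.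
Proof. by move=> c d /(congr1 (fun p : {perm gT} => p 1)); rewrite !rmulE !mul1g. Qed.

Hypothesis GRR : graph_aut (cayley_rel A) \isog [set: gT].

Lemma GRR_aut_rmul p : p \in graph_aut (cayley_rel A) -> exists c, forall g, p g = g * c.
Proof.
have rmulG : rmul @: [set: gT] = graph_aut (cayley_rel A).
  apply/eqP; rewrite eqEcard card_imset; last exact: rmul_inj.
  rewrite (card_isog GRR) leqnn andbT.
  by apply/subsetP => _ /imsetP[c _ ->]; exact: rmul_cayley_aut.
by rewrite -rmulG => /imsetP[c _ ->]; exists c; exact: rmulE.
Qed.

Lemma GRR_conj_notin : ~~ abelian [set: gT] -> exists x a, x \in A /\ x ^ a \notin A.
Proof.
move=> nabG.
have [/existsP[x /existsP[a /andP[xA xaA]]] | normA] :=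
  boolP [exists x, exists a, (x \in A) && (x ^ a \notin A)]; first by exists x, a.
have conjA x a : (x ^ a \in A) = (x \in A).
  have inA y b : y \in A -> y ^ b \in A.
    move=> yA; apply: contraR normA => ybA; apply/existsP; exists y.
    by apply/existsP; exists b; rewrite yA.
  by apply/idP/idP => [/(inA _ a^-1)|/inA//]; rewrite conjgK.
case/negP: nabG; apply/centsP => a _ g _.
pose cj := perm (conjg_inj a).
have cj_aut : cj \in graph_aut (cayley_rel A).
  rewrite inE; apply/forallP => u; apply/forallP => v.
  by rewrite !permE /cayley_rel -conjVg -conjMg conjA.
have [c cjE] := GRR_aut_rmul cj_aut.
have c1 : c = 1 by have := cjE 1; rewrite permE conj1g mul1g.
have := cjE g; rewrite permE c1 mulg1 => gaE.
by rewrite /commute (conjgC g a) gaE.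
Qed.

End CayleyGraph.

Lemma sum_pairs_in (T : finType) (X Y : {pred T}) (P : T -> T -> bool) :
  \sum_g \sum_h [&& g \in X, h \in Y & P g h] = \sum_(g in X) \sum_(h in Y) P g h.
Proof.
rewrite [RHS]big_mkcond; apply: eq_bigr => g _; case: (g \in X); last by rewrite big1.
by rewrite [RHS]big_mkcond; apply: eq_bigr => h _; case: (h \in Y).
Qed.

Section QuotientCounts.
Variable gT : finGroupType.
Implicit Types X Y Z : {set gT}.

Definition rquot_count X Y Z : nat :=
  \sum_g \sum_h [&& g \in X, h \in Y & (h * g^-1)%g \in Z].

Definition lquot_count X Y Z : nat :=
  \sum_g \sum_h [&& g \in X, h \in Y & (g^-1 * h)%g \in Z].

Lemma lquot_rquot_count X Y Z : lquot_count X Y Z = rquot_count Z Y X.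
Proof.
rewrite /lquot_count /rquot_count exchange_big [RHS]exchange_big.
apply: eq_bigr => h _.
have divh_inj : injective (fun u => h * u^-1) by move=> u v /mulgI/invg_inj.
rewrite (reindex_inj divh_inj); apply: eq_bigr => u _ /=.
by rewrite invMg invgK mulgKV; case: (_ * _ \in X); case: (u \in Z); rewrite /= ?andbF.
Qed.

Lemma rquot_countV X Y Z : rquot_count X^-1 Y^-1 Z = lquot_count Y X Z.
Proof.
rewrite /rquot_count /lquot_count exchange_big (reindex_inj invg_inj).
apply: eq_bigr => h _; rewrite (reindex_inj invg_inj); apply: eq_bigr => g _ /=.
by rewrite !memV_invg invgK andbCA.
Qed.

End QuotientCounts.

Lemma card_astabsR_dvdn (gT : finGroupType) (S : {set gT}) : #|'N(S | 'R)| %| #|S|.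
Proof.
have actsN : [acts 'N(S | 'R), on S | 'R] by [].
rewrite (card_uniform_partition (n := #|'N(S | 'R)|) _ (orbit_partition actsN)) ?dvdn_mull //.
by move=> _ /imsetP[s _ ->]; rewrite orbitR card_lcoset.
Qed.

Section BiCayley.
Variables (gT : finGroupType) (A S : {set gT}).
Hypothesis AV : A^-1 = A.

Definition bicayley_rel : rel (gT + gT) :=
  fun u v => match u, v with
  | inl g, inl h | inr g, inr h => cayley_rel A g h
  | inl g, inr h | inr h, inl g => h * g^-1 \in S
  end.

Lemma bicayley_sym : symmetric bicayley_rel.
Proof. by move=> [g|g] [h|h] //=; rewrite /cayley_rel -{1}AV inE invMg invgK. Qed.

Lemma bicayley_simple : 1 \notin A -> simple_graph bicayley_rel.
Proof.
move=> A1; split=> [|[g|g]]; first exact: bicayley_sym.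
- by rewrite /= /cayley_rel mulgV (negbTE A1).
- by rewrite /= /cayley_rel mulgV (negbTE A1).
Qed.

Definition rshift_fun (c : gT) (v : gT + gT) : gT + gT :=
  match v with inl g => inl (g * c) | inr h => inr (h * c) end.

Lemma rshift_fun_inj c : injective (rshift_fun c).
Proof. by move=> [g|g] [h|h] //= [] /mulIg ->. Qed.

Definition rshift c : {perm gT + gT} := perm (@rshift_fun_inj c).

Lemma rshiftE c v : rshift c v = rshift_fun c v.
Proof. exact: permE. Qed.

Lemma rshift_aut c : rshift c \in graph_aut bicayley_rel.
Proof.
rewrite inE; apply/forallP => -[g|g]; apply/forallP => -[h|h];
  by rewrite !rshiftE /= ?/cayley_rel invMg mulgA mulgK.
Qed.

Lemma rshiftM : {morph rshift : c d / c * d}.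
Proof. by move=> c d; apply/permP => -[g|g]; rewrite permM !rshiftE /= mulgA. Qed.

Canonical rshift_morphism : {morphism [set: gT] >-> {perm gT + gT}} :=
  Morphism (in2W rshiftM).

Lemma injm_rshift : 'injm rshift_morphism.
Proof.
apply/injmP => c d _ _ /(congr1 (fun p : {perm gT + gT} => p (inl 1))).
by rewrite /= !rshiftE /= !mul1g => -[].
Qed.

Definition rshifts := (rshift_morphism @* [set: gT])%G.

Lemma rshifts_isog : rshifts \isog [set: gT].
Proof. by rewrite isog_sym sub_isog ?injm_rshift. Qed.

Lemma rshiftsP p : reflect (exists c, p = rshift c) (p \in rshifts).
Proof.
apply: (iffP idP) => [/morphimP[c _ _ ->] | [c ->]]; first by exists c.
by rewrite mem_morphim ?inE.
Qed.

Lemma inl_rshift g : inl g = rshift g (inl 1).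
Proof. by rewrite rshiftE /= mul1g. Qed.

Lemma inr_rshift g : inr g = rshift g (inr 1).
Proof. by rewrite rshiftE /= mul1g. Qed.

Lemma semiregular_rshifts : semiregular_perm rshifts.
Proof.
move=> _ v /rshiftsP[c ->]; rewrite rshiftE => fix_v.
have c1 : c = 1 by case: v fix_v => g /= [] /(canRL (mulKg g)); rewrite mulVg.
by apply/permP => w; rewrite c1 rshiftE perm1; case: w => w /=; rewrite mulg1.
Qed.

Lemma card_rshifts_orbits : #|[set orbit 'P rshifts v | v : gT + gT]| = 2.
Proof.
have orbit_rshift v c : orbit 'P rshifts (rshift c v) = orbit 'P rshifts v.
  by apply/orbit_eqP/orbitP; exists (rshift c) => //; apply/rshiftsP; exists c.
have -> : [set orbit 'P rshifts v | v : gT + gT] =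
          [set orbit 'P rshifts (inl 1); orbit 'P rshifts (inr 1)].
  apply/setP => X; rewrite !inE; apply/imsetP/orP => [[[g|g] _ ->] | [] /eqP ->].
  - by left; rewrite inl_rshift orbit_rshift.
  - by right; rewrite inr_rshift orbit_rshift.
  - by exists (inl 1).
  - by exists (inr 1).
rewrite cards2; case: eqP => // sameO.
have : inr 1 \in orbit 'P rshifts (inl 1) by rewrite sameO orbit_refl.
by case/orbitP => _ /rshiftsP[c ->]; rewrite /= apermE rshiftE.
Qed.

Lemma bicayley_regular : regular_graph bicayley_rel.
Proof.
have nbhd_sum v : #|[set w | bicayley_rel v w]| = \sum_w bicayley_rel v w.
  by rewrite -sum1_card big_mkcond; apply: eq_bigr => w _; rewrite inE; case: ifP.
have nbhd_inr : #|[set w | bicayley_rel (inr 1) w]| = #|[set w | bicayley_rel (inl 1) w]|.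
  rewrite !nbhd_sum !big_sumType /= addnC; congr (_ + _).
  by rewrite (reindex_inj invg_inj); apply: eq_bigr => g _; rewrite /= invg1 mulg1 mul1g invgK.
exists #|[set w | bicayley_rel (inl 1) w]| => -[g|g].
  by rewrite inl_rshift card_nbhd_aut ?rshift_aut.
by rewrite inr_rshift card_nbhd_aut ?rshift_aut.
Qed.

Lemma triangles_bicayley_inl g :
  triangles bicayley_rel (inl g) =
    rquot_count A A A + 2 * lquot_count S S A + rquot_count S S A.
Proof.
rewrite inl_rshift triangles_aut ?rshift_aut // (triangles_sumType _ bicayley_sym).
rewrite lquot_rquot_count /rquot_count; congr (_ + _ * _ + _);
  by do 2 (apply: eq_bigr => ? _); rewrite /= /cayley_rel invg1 !mulg1.
Qed.

Lemma triangles_bicayley_inr g :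
  triangles bicayley_rel (inr g) =
    lquot_count S S A + 2 * rquot_count S S A + rquot_count A A A.
Proof.
rewrite inr_rshift triangles_aut ?rshift_aut // (triangles_sumType _ bicayley_sym).
rewrite -(rquot_countV S S A) -(lquot_rquot_count A S S) -(rquot_countV S A S) AV.
rewrite /rquot_count; congr (_ + _ * _ + _);
  by do 2 (apply: eq_bigr => ? _); rewrite /= /cayley_rel ?inE ?invg1 ?mulg1 ?mul1g.
Qed.

Lemma bicayley_aut_sides p :
  lquot_count S S A != rquot_count S S A -> p \in graph_aut bicayley_rel ->
  (forall g, exists h, p (inl g) = inl h) /\ (forall g, exists h, p (inr g) = inr h).
Proof.
move=> LR autp.
have tri_neq g h : triangles bicayley_rel (inl g) != triangles bicayley_rel (inr h).
  by rewrite triangles_bicayley_inl triangles_bicayley_inr; apply: contra LR => /eqP; lia.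
split=> g; case pg: (p _) => [h|h]; try by exists h.
- by move: (tri_neq g h); rewrite -pg triangles_aut // eqxx.
- by move: (tri_neq h g); rewrite -pg triangles_aut // eqxx.
Qed.

Lemma bicayley_autE :
  graph_aut (cayley_rel A) \isog [set: gT] -> 'N(S | 'R) = 1 ->
  lquot_count S S A != rquot_count S S A ->
  graph_aut bicayley_rel = rshifts.
Proof.
move=> GRR NS1 LR; apply/eqP; rewrite eqEsubset andbC.
apply/andP; split; apply/subsetP => p; first by case/rshiftsP=> c ->; exact: rshift_aut.
move=> autp; have [pl pr] := bicayley_aut_sides LR autp.
have [ql qlE] := induced_perm (@inl_inj _ _) pl.
have [qr qrE] := induced_perm (@inr_inj _ _) pr.
have ql_aut : ql \in graph_aut (cayley_rel A).
  rewrite inE; apply/forallP => u; apply/forallP => v; apply/eqP.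
  by have := graph_aut_rel (inl u) (inl v) autp; rewrite !qlE.
have qr_aut : qr \in graph_aut (cayley_rel A).
  rewrite inE; apply/forallP => u; apply/forallP => v; apply/eqP.
  by have := graph_aut_rel (inr u) (inr v) autp; rewrite !qrE.
have [c qlc] := GRR_aut_rmul GRR ql_aut.
have [c' qrc'] := GRR_aut_rmul GRR qr_aut.
have : c' * c^-1 \in 'N(S | 'R).
  apply/astabsP => s; have := graph_aut_rel (inl 1) (inr s) autp.
  by rewrite qlE qrE /= qlc qrc' mul1g invg1 mulg1 mulgA.
rewrite NS1 inE -eq_mulgV1 => /eqP c'c.
apply/rshiftsP; exists c; apply/permP => -[g|g].
  by rewrite qlE qlc rshiftE.
by rewrite qrE qrc' c'c rshiftE.
Qed.

Lemma bicayley_mGRR :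
  1 \notin A -> graph_aut (cayley_rel A) \isog [set: gT] -> 'N(S | 'R) = 1 ->
  lquot_count S S A != rquot_count S S A -> has_mGRR gT 2.
Proof.
move=> A1 GRR NS1 LR; have autE := bicayley_autE GRR NS1 LR.
exists (gT + gT)%type, bicayley_rel; split.
- exact: bicayley_simple.
- exact: bicayley_regular.
- exists rshifts; split; rewrite ?autE //.
  + exact: rshifts_isog.
  + exact: semiregular_rshifts.
  + exact: card_rshifts_orbits.
- by rewrite autE rshifts_isog.
Qed.

End BiCayley.

Section ConnectionSet.
Variables (gT : finGroupType) (A : {set gT}) (a x : gT).
Hypotheses (AV : A^-1 = A) (A1 : 1 \notin A) (xA : x \in A) (axA : a * x * a^-1 \notin A).

Let S : {set gT} := [set 1; a; a * x].

Lemma sum_conn_set (F : gT -> nat) : \sum_(g in S) F g = F 1 + F a + F (a * x).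
Proof.
have a1 : a != 1 by apply: contraNneq axA => ->; rewrite mul1g invg1 mulg1.
have ax1 : a * x != 1.
  by apply: contraNneq axA => /(canRL (mulgK x)); rewrite mul1g => ->; rewrite mulVg mul1g invgK.
have a_ax : a != a * x by apply: contraNneq A1 => /esym/(canRL (mulKg a)); rewrite mulVg => <-.
rewrite /S -setUA big_setU1 ?big_setU1 ?big_set1 /= ?addnA // !inE ?negb_or ?a_ax //.
by rewrite eq_sym a1 eq_sym ax1.
Qed.

Lemma card_conn_set : #|S| = 3.
Proof. by rewrite -sum1_card sum_conn_set. Qed.

Lemma lquot_count_conn_set : lquot_count S S A = rquot_count S S A + 2.
Proof.
have memV y : (y^-1 \in A) = (y \in A) by rewrite -{1}AV inE invgK.
rewrite /lquot_count /rquot_count !sum_pairs_in !sum_conn_set.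
have -> : a * (a * x)^-1 = (a * x * a^-1)^-1 by rewrite !invMg invgK.
rewrite !invg1 !mulg1 !mul1g !mulVg !mulgV mulKg !memV invMg mulgKV memV.
by rewrite (negbTE A1) (negbTE axA) xA; lia.
Qed.

Lemma astabsR_conn_set : 'N(S | 'R) = 1.
Proof.
apply/eqP; rewrite trivg_card1; apply: contraTT (card_astabsR_dvdn S) => N1.
rewrite card_conn_set; apply/negP => /(prime_nt_dvdP (isT : prime 3) N1) N3.
have NS : 'N(S | 'R) \subset S.
  apply/subsetP => n Nn; have := astabs_act 1 Nn; rewrite /= mul1g => ->.
  by rewrite !inE eqxx.
have SN : S = 'N(S | 'R).
  by apply/eqP; rewrite eq_sym eqEcard NS N3 card_conn_set.
have aN : a \in 'N(S | 'R) by rewrite -SN !inE eqxx orbT.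
have xN : x \in 'N(S | 'R).
  by rewrite -(mulKg a x) groupM ?groupV //= -SN !inE eqxx !orbT.
have /centsP cN : abelian 'N(S | 'R) by rewrite cyclic_abelian ?prime_cyclic ?N3.
by move: axA; rewrite (cN a aN x xN) mulgK xA.
Qed.

End ConnectionSet.

Theorem lemma3p8 (gT : finGroupType) :
  ~~ abelian [set: gT] -> has_GRR gT -> has_mGRR gT 2.
Proof.
move=> nabG [A [AV A1 GRR]].
have [x [b [xA xbA]]] := GRR_conj_notin GRR nabG.
have axA : b^-1 * x * b^-1^-1 \notin A by rewrite invgK -mulgA.
apply: (bicayley_mGRR (S := [set 1; b^-1; b^-1 * x]) AV A1 GRR).
  exact: astabsR_conn_set A1 xA axA.
by rewrite (lquot_count_conn_set AV A1 xA axA) -[X in _ != X]addn0 eqn_add2l.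
Qed.
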